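(* Let $\psi:V\to\mathbb R$ be an eigenfunction of $-A_\alpha$ with eigenvalue $\lambda\ge0$. Then for every $k\in\mathbb N$, the function $f_{\psi,k}:\Xi_k\to\mathbb R$, $f_{\psi,k}(\eta):=\sum_{x\in V}\psi(x)\eta_x$, is an eigenfunction of $-L_k$ with the same eigenvalue $\lambda$.
   Context: $V$ is a finite set with symmetric non-negative weights $c_{xy}=c_{yx}\ge0$ forming a connected graph, and $\alpha=(\alpha_x)_{x\in V}$ positive. $A_\alpha f(x)=\sum_{y}c_{xy}\alpha_y(f(y)-f(x))$ for $f:V\to\mathbb R$. $\Xi_k:=\{\eta\in\mathbb N_0^V:\sum_x\eta_x=k\}$ and $L_kf(\eta)=\sum_x\eta_x\sum_y c_{xy}(\alpha_y+\eta_y)(f(\eta-\delta_x+\delta_y)-f(\eta))$ for $f:\Xi_k\to\mathbb R$, where $\eta-\delta_x+\delta_y$ is obtained from $\eta$ by moving one particle from $x$ to $y$. An eigenfunction is required to be non-zero. *)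

From mathcomp Require Import all_boot all_order all_algebra.
Set Implicit Arguments. Unset Strict Implicit. Unset Printing Implicit Defensive.
Import Order.TTheory GRing.Theory Num.Theory.
Local Open Scope ring_scope.

Section Defs.
Variables (R : realFieldType) (V : finType).

Definition A_alpha (c : V -> V -> R) (alpha : V -> R) (f : V -> R) (x : V) : R :=
  \sum_(y : V) c x y * alpha y * (f y - f x).

Definition graph_connected (c : V -> V -> R) : Prop :=
  forall x y : V, connect (fun u v => 0 < c u v) x y.

Definition Xi (k : nat) := { eta : {ffun V -> nat} | (\sum_(x : V) eta x)%N == k }.

Definition move_raw (eta : {ffun V -> nat}) (x y : V) : {ffun V -> nat} :=
  [ffun z => ((eta z - (z == x)) + (z == y))%N].

Lemma move_raw_sum (eta : {ffun V -> nat}) (x y : V) :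
  (0 < eta x)%N ->
  (\sum_(z : V) move_raw eta x y z)%N = (\sum_(z : V) eta z)%N.
Proof.
move=> hx; rewrite /move_raw.
under eq_bigr do rewrite ffunE.
rewrite big_split /=.
rewrite [X in (_ + X)%N](bigD1 y) //= eqxx.
rewrite [X in (_ + (_ + X))%N]big1 ?addn0; last by move=> z hz; rewrite (negbTE hz).
rewrite (bigD1 x) //= eqxx [RHS](bigD1 x) //=.
rewrite (eq_bigr (fun z => eta z)); last by move=> z hz; rewrite (negbTE hz) subn0.
rewrite addnAC subnK //.
Qed.

Lemma move_raw_Xi (k : nat) (eta : {ffun V -> nat}) (x y : V) :
  (0 < eta x)%N -> (\sum_(z : V) eta z)%N == k ->
  (\sum_(z : V) move_raw eta x y z)%N == k.
Proof. by move=> hx; rewrite move_raw_sum. Qed.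

(* moving one particle from x to y; when eta_x = 0 the move is impossible and
   we return eta itself (such terms carry the factor eta_x = 0 in L_k anyway) *)
Definition move (k : nat) (eta : Xi k) (x y : V) : Xi k :=
  match boolP (0 < val eta x)%N with
  | AltTrue hx => exist _ (move_raw (val eta) x y)
                    (move_raw_Xi y hx (valP eta))
  | AltFalse _ => eta
  end.

Definition L_gen (c : V -> V -> R) (alpha : V -> R) (k : nat)
  (f : Xi k -> R) (eta : Xi k) : R :=
  \sum_(x : V) (val eta x)%:R *
    \sum_(y : V) c x y * (alpha y + (val eta y)%:R) * (f (move eta x y) - f eta).

Definition f_psi (psi : V -> R) (k : nat) (eta : Xi k) : R :=
  \sum_(x : V) psi x * (val eta x)%:R.

End Defs.

From mathcomp Require Import all_boot all_order all_algebra.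
From mathcomp Require Import ring.
Set Implicit Arguments. Unset Strict Implicit. Unset Printing Implicit Defensive.
Import Order.TTheory GRing.Theory Num.Theory.
Local Open Scope ring_scope.

(* Linear observables are closed under the inclusion generator:
   [L_k f_psi = f_(A_alpha psi)].  Moving a particle from [x] to [y] changes
   [f_psi] by [psi y - psi x], so [L_k f_psi] splits into the part with the
   weights [alpha y], which is [f_(A_alpha psi)], and the part with the weights
   [eta_x eta_y c_xy], which is antisymmetric in [(x, y)] by the symmetry of [c]
   and hence sums to zero.  The eigenvalue equation for [psi] then transfers to
   [f_psi], which is nonzero on the configuration with all [k] particles at a
   site where [psi] does not vanish. *)

Lemma sum_antisym_eq0 (R : numDomainType) (I : finType) (F : I -> I -> R) :
  (forall i j, F j i = - F i j) -> \sum_i \sum_j F i j = 0.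
Proof.
move=> F_antisym; set S := \sum_i \sum_j F i j.
have S_opp : S = - S.
  rewrite {1}/S exchange_big -sumrN; apply: eq_bigr => i _.
  by rewrite -sumrN; apply: eq_bigr => j _; rewrite F_antisym.
have : S *+ 2 == 0 by rewrite mulr2n {2}S_opp subrr.
by rewrite mulrn_eq0 => /eqP.
Qed.

Lemma sum_mul_indicator (R : pzSemiRingType) (I : finType) (F : I -> R) j :
  \sum_i F i * (i == j)%:R = F j.
Proof.
rewrite (bigD1 j) //= eqxx mulr1 big1 ?addr0 // => i /negbTE ->.
by rewrite mulr0.
Qed.

Section LinearObservables.
Variables (R : realFieldType) (V : finType).
Implicit Types (psi : V -> R) (x y : V).

Lemma f_psi_move psi k (eta : Xi V k) x y : (0 < val eta x)%N ->
  f_psi psi (move eta x y) = f_psi psi eta - psi x + psi y.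
Proof.
rewrite /move; case: {-}_ / boolP => [eta_x_gt0 _ | ] /=; last by move/negP.
rewrite /f_psi /= -(sum_mul_indicator psi x) -(sum_mul_indicator psi y).
rewrite -sumrB -big_split /=; apply: eq_bigr => z _.
rewrite ffunE natrD natrB; first by ring.
by case: eqP => // ->.
Qed.

Lemma natr_mul_f_psi_move psi k (eta : Xi V k) x y :
  (val eta x)%:R * (f_psi psi (move eta x y) - f_psi psi eta)
  = (val eta x)%:R * (psi y - psi x).
Proof.
have [-> | ] := posnP (val eta x); first by rewrite !mul0r.
by move=> /f_psi_move ->; congr (_ * _); ring.
Qed.

Lemma L_gen_f_psi (c : V -> V -> R) (alpha : V -> R) psi k (eta : Xi V k) :
  (forall x y, c x y = c y x) ->
  L_gen c alpha (f_psi psi (k:=k)) eta = f_psi (A_alpha c alpha psi) eta.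
Proof.
move=> c_sym; pose n z : R := (val eta z)%:R.
have split_weights : L_gen c alpha (f_psi psi (k:=k)) eta =
    f_psi (A_alpha c alpha psi) eta
    + \sum_x \sum_y n x * n y * c x y * (psi y - psi x).
  rewrite /L_gen /f_psi -big_split /=; apply: eq_bigr => x _.
  rewrite /A_alpha !mulr_sumr mulr_suml -big_split /=; apply: eq_bigr => y _.
  by rewrite mulrCA natr_mul_f_psi_move -/(n x) -/(n y); ring.
rewrite split_weights sum_antisym_eq0 ?addr0 // => x y.
by rewrite c_sym; ring.
Qed.

Lemma concentrated_subproof (k : nat) x :
  (\sum_z [ffun z => if z == x then k else 0%N] z)%N == k.
Proof.
by under eq_bigr do rewrite ffunE; rewrite -big_mkcond big_pred1_eq.
Qed.

Definition concentrated (k : nat) x : Xi V k :=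
  exist (fun eta : {ffun V -> nat} => (\sum_z eta z)%N == k) _
    (concentrated_subproof k x).

Lemma f_psi_concentrated psi (k : nat) x :
  f_psi psi (concentrated k x) = psi x * k%:R.
Proof.
rewrite /f_psi -(sum_mul_indicator (fun z => psi z * k%:R) x).
by apply: eq_bigr => z _; rewrite /= ffunE; case: eqP; rewrite ?mulr1 ?mulr0.
Qed.

End LinearObservables.

Theorem lemma2p1 (R : realFieldType) (V : finType)
  (c : V -> V -> R) (alpha : V -> R)
  (c_sym : forall x y, c x y = c y x)
  (c_ge0 : forall x y, 0 <= c x y)
  (c_conn : graph_connected c)
  (alpha_pos : forall x, 0 < alpha x)
  (psi : V -> R) (lambda : R)
  (psi_nz : exists x, psi x != 0)
  (psi_eig : forall x, - A_alpha c alpha psi x = lambda * psi x)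
  (lambda_ge0 : 0 <= lambda) :
  forall k : nat, (0 < k)%N ->
    (exists eta : Xi V k, f_psi psi eta != 0) /\
    (forall eta : Xi V k,
       - L_gen c alpha (f_psi psi (k:=k)) eta = lambda * f_psi psi eta).
Proof.
move=> k k_gt0; split.
  have [x psi_x_neq0] := psi_nz.
  exists (concentrated k x).
  by rewrite f_psi_concentrated mulf_neq0 // pnatr_eq0 -lt0n.
move=> eta; rewrite L_gen_f_psi // /f_psi -sumrN mulr_sumr.
by apply: eq_bigr => x _; rewrite -mulNr psi_eig mulrA.
Qed.
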